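(* Let $n\ge 2$ and let $\rho$ be an $n$-qubit symmetric state that is entangled. Then $\rho$ is genuinely entangled and $$l(\rho)=\min\{k\in\{2,\dots,n\}\mid \rho_{[k]}\text{ is entangled}\}.$$
   Context: Let $n\ge 2$, $[n]=\{1,\dots,n\}$, and $\mathcal H_{[n]}=\bigotimes_{i=1}^n\mathcal H_i$ with $\mathcal H_i\cong\mathbb C^2$. For $S\subseteq[n]$, $\mathcal H_S=\bigotimes_{j\in S}\mathcal H_j$, and for a density matrix $\rho$ on $\mathcal H_{[n]}$, $\rho_S=\mathrm{Tr}_{[n]\setminus S}\rho$; $\rho_{[k]}:=\rho_{\{1,\dots,k\}}$. A pure state $|\psi\rangle$ is separable with respect to the bipartition $S|\bar S$ if $|\psi\rangle=|\alpha\rangle_S\otimes|\beta\rangle_{\bar S}$; it is biseparable if this holds for some $\emptyset\ne S\subsetneq[n]$, and fully separable if it is separable with respect to every bipartition. A mixed state is biseparable (resp. fully separable) if it is a convex combination of biseparable (resp. fully separable) pure states; it is entangled if not fully separable and genuinely entangled if not biseparable. For a collection $\mathcal S$ of subsets of $[n]$, the compatibility set is $\mathcal C(\rho,\mathcal S)=\{\sigma\text{ density matrix on }\mathcal H_{[n]}:\sigma_S=\rho_S\ \forall S\in\mathcal S\}$. $\mathcal S$ determines $\rho$ if $\mathcal C(\rho,\mathcal S)=\{\rho\}$, and $\mathcal S$ detects $\rho$'s genuine multipartite entanglement (GME) if every element of $\mathcal C(\rho,\mathcal S)$ is genuinely entangled. The state determination length is $L(\rho)=\min_{\mathcal S\text{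 determines }\rho}\max_{S\in\mathcal S}|S|$, and for genuinely entangled $\rho$ the entanglement detection length is $l(\rho)=\min_{\mathcal S\text{ detects }\rho\text{'s GME}}\max_{S\in\mathcal S}|S|$. The symmetric subspace of $\mathcal H_S$ consists of vectors invariant under swapping any two qubits of $S$; a state on $\mathcal H_S$ is symmetric if its range is contained in the symmetric subspace. *)

From HB Require Import structures.
From mathcomp Require Import all_boot all_order all_algebra all_fingroup.
From mathcomp Require Import complex.
From mathcomp Require Import reals.
Unset Printing Implicit Defensive.
Import Order.TTheory GRing.Theory Num.Theory.
Local Open Scope ring_scope.

Section Qubits.
Context {R : realType}.
Notation C := (R[i]).

(* A finite set of qubits is indexed by a finType I; computational basis
   states of H_I = (C^2)^{(x) I} are configurations I -> bool. *)
Definition cfg (I : finType) := {ffun I -> bool}.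
Definition qvec (I : finType) := cfg I -> C.
Definition qop (I : finType) := cfg I -> cfg I -> C.

Definition sub {I : finType} (S : {set I}) := {i : I | i \in S}.

Definition restr {I : finType} (S : {set I}) (x : cfg I) : cfg (sub S) :=
  [ffun j => x (val j)].

Definition glue {I : finType} (S : {set I}) (x : cfg (sub S)) (z : cfg I) : cfg I :=
  [ffun i => if insub i is Some j then x j else z i].

Definition ptrace {I : finType} (S : {set I}) (rho : qop I) : qop (sub S) :=
  fun x y => \sum_(z : cfg I | [forall i, (i \in S) ==> ~~ z i])
               rho (glue S x z) (glue S y z).

Definition density {I : finType} (rho : qop I) : Prop :=
  (forall x y, rho x y = (rho y x)^*) /\
  (forall v : qvec I, 0 <= \sum_x \sum_y (v x)^* * rho x y * v y) /\
  \sum_x rho x x = 1.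

Definition unit_vec {I : finType} (psi : qvec I) : Prop :=
  \sum_x (psi x)^* * psi x = 1.

Definition proj {I : finType} (psi : qvec I) : qop I :=
  fun x y => psi x * (psi y)^*.

Definition sep_wrt {I : finType} (S : {set I}) (psi : qvec I) : Prop :=
  exists (alpha : qvec (sub S)) (beta : qvec (sub (~: S))),
    forall x, psi x = alpha (restr S x) * beta (restr (~: S) x).

Definition pure_bisep {I : finType} (psi : qvec I) : Prop :=
  exists S : {set I}, [/\ S != set0, S != setT & sep_wrt S psi].

Definition pure_fullsep {I : finType} (psi : qvec I) : Prop :=
  forall S : {set I}, sep_wrt S psi.

Definition conv_pure {I : finType} (P : qvec I -> Prop) (rho : qop I) : Prop :=
  exists (m : nat) (p : 'I_m -> C) (psi : 'I_m -> qvec I),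
    [/\ forall j, 0 <= p j,
        \sum_j p j = 1,
        forall j, unit_vec (psi j) /\ P (psi j)
      & forall x y, rho x y = \sum_j p j * proj (psi j) x y].

Definition biseparable {I : finType} (rho : qop I) := conv_pure (@pure_bisep I) rho.
Definition fully_separable {I : finType} (rho : qop I) :=
  conv_pure (@pure_fullsep I) rho.
Definition entangled {I : finType} (rho : qop I) := ~ fully_separable rho.
Definition genuinely_entangled {I : finType} (rho : qop I) := ~ biseparable rho.

Definition compatible {I : finType} (rho : qop I) (Sc : {set {set I}})
  (sigma : qop I) : Prop :=
  density sigma /\
  forall S, S \in Sc -> forall x y, ptrace S sigma x y = ptrace S rho x y.

Definition detects_GME {I : finType} (Sc : {set {set I}}) (rho : qop I) : Prop :=
  forall sigma, compatible rho Sc sigma -> genuinely_entangled sigma.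

(* L = l(rho) := min over GME-detecting Sc of max_{S in Sc} |S| *)
Definition is_detection_length {I : finType} (rho : qop I) (L : nat) : Prop :=
  (exists Sc, detects_GME Sc rho /\ \max_(S in Sc) #|S| = L) /\
  (forall Sc, detects_GME Sc rho -> (L <= \max_(S in Sc) #|S|)%N).

Definition swapcfg {I : finType} (i j : I) (x : cfg I) : cfg I :=
  [ffun a => x (tperm i j a)].

Definition symmetric_vec {I : finType} (v : qvec I) : Prop :=
  forall (i j : I) x, v (swapcfg i j x) = v x.

Definition apply_op {I : finType} (rho : qop I) (v : qvec I) : qvec I :=
  fun x => \sum_y rho x y * v y.

Definition symmetric_state {I : finType} (rho : qop I) : Prop :=
  density rho /\ forall v, symmetric_vec (apply_op rho v).

(* [k] = {1,...,k}, i.e. the first k qubits *)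
Definition first (n k : nat) : {set 'I_n} := [set i : 'I_n | (i < k)%N].

End Qubits.

From HB Require Import structures.
From mathcomp Require Import all_boot all_order all_algebra all_fingroup.
From mathcomp Require Import complex reals ring zify.
From Stdlib Require Import Classical Wf_nat.
Set Implicit Arguments. Unset Strict Implicit. Unset Printing Implicit Defensive.
Import Order.TTheory GRing.Theory Num.Theory.
Local Open Scope ring_scope.

(* A symmetric pure state that is a product across some cut S | ~S is a tensor
   power c |b>^(x)n: its amplitudes depend only on the Hamming weight, and the
   product structure makes the weight profile f satisfy the rank-one Hankel
   relations f(p+q) f(p'+q') = f(p+q') f(p'+q), which force f to be geometric.

   Let sigma be biseparable with the same k-qubit marginals as
   rho.  For every pair a, b the marginal of sigma on a k-set containing a, b is
   invariant under swapping a and b; positivity then makes every pure component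
   of sigma swap-invariant, hence a tensor power.  So sigma, and with it its
   marginal rho_[k], is fully separable.  Taking k = n shows rho is GME.

   If rho_[m] is separable it is a mixture of tensor powers
   c_j |b_j>^(x)m (for m = 1 every qubit state is; for m >= 2 by the
   component argument above).  Replacing each by c_j |b_j>^(x)n, suitably reweighted,
   gives a fully separable symmetric sigma with sigma_[m] = rho_[m]; since both
   are permutation invariant and any set of at most m qubits is moved into [m]
   by transpositions, all marginals of size at most m agree. *)

Section PartialTraces.
Context {R : realType}.
Local Notation C := (R[i]).
Local Notation qop := (@qop R).

Definition splice {I : finType} (S : {set I}) (u z : cfg I) : cfg I :=
  [ffun i => if i \in S then u i else z i].

Definition vanishes_on {I : finType} (S : {set I}) (z : cfg I) : bool :=
  [forall i, (i \in S) ==> ~~ z i].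

Definition cfg0 {I : finType} : cfg I := [ffun => false].

Lemma vanishes_onP {I : finType} (S : {set I}) (z : cfg I) :
  reflect (forall i, i \in S -> z i = false) (vanishes_on S z).
Proof.
apply: (iffP forallP) => H i.
  by move=> Si; move: (H i); rewrite Si /= => /negbTE.
by apply/implyP => /H ->.
Qed.

Lemma glue_restr {I : finType} (S : {set I}) u z :
  glue S (restr S u) z = splice S u z.
Proof.
apply/ffunP=> i; rewrite !ffunE; case: insubP => [j Si Ej|/negbTE -> //].
by rewrite ffunE Ej Si.
Qed.

Lemma glue_in {I : finType} (S : {set I}) x z (j : sub S) :
  glue S x z (val j) = x j.
Proof.
rewrite ffunE; case: insubP => [k _ Ek|]; first by congr (x _); apply: val_inj.
by rewrite (valP j).
Qed.

Lemma restr_glue {I : finType} (S : {set I}) x z : restr S (glue S x z) = x.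
Proof. by apply/ffunP => j; rewrite ffunE glue_in. Qed.

Lemma glue_out {I : finType} (S : {set I}) x z (j : sub (~: S)) :
  glue S x z (val j) = z (val j).
Proof.
rewrite ffunE; case: insubP => [k Sj _|//].
by have := valP j; rewrite inE Sj.
Qed.

Lemma splice_glue {I : finType} (S : {set I}) x z :
  vanishes_on S z -> splice S cfg0 (glue S x z) = z.
Proof.
move=> /vanishes_onP z0; apply/ffunP => i; rewrite !ffunE.
case: (boolP (i \in S)) => Si; first by rewrite z0.
by case: insubP => [k Si' _|//]; rewrite Si' in Si.
Qed.

Lemma sum_glue {I : finType} (S : {set I}) (F : cfg I -> C) :
  \sum_u F u = \sum_(x : cfg (sub S)) \sum_(z | vanishes_on S z) F (glue S x z).
Proof.
rewrite pair_big_dep /=.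
rewrite (reindex_onto (fun p : cfg (sub S) * cfg I => glue S p.1 p.2)
                      (fun u => (restr S u, splice S cfg0 u))) /=; last first.
  move=> u _; rewrite glue_restr; apply/ffunP => i; rewrite !ffunE.
  by case: (i \in S).
apply: eq_bigl => -[x z] /=; rewrite restr_glue; apply/eqP/idP.
  by case=> <-; apply/vanishes_onP => i Si; rewrite !ffunE Si.
by move=> z0; rewrite splice_glue.
Qed.

Lemma sum_glue_at {I : finType} (S : {set I}) z (G : cfg I -> C) :
  vanishes_on S z -> (forall u, splice S cfg0 u != z -> G u = 0) ->
  \sum_u G u = \sum_x G (glue S x z).
Proof.
move=> z0 G0; rewrite (sum_glue S); apply: eq_bigr => x _.
rewrite (bigD1 z) //= big1 ?addr0 // => z' /andP [z'0 ne].
by apply: G0; rewrite splice_glue.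
Qed.

Definition ptrace_cfg {I : finType} (S : {set I}) (X : qop I) (u v : cfg I) : C :=
  ptrace S X (restr S u) (restr S v).

Lemma ptrace_cfgE {I : finType} (S : {set I}) (X : qop I) u v :
  ptrace_cfg S X u v =
  \sum_(z | vanishes_on S z) X (splice S u z) (splice S v z).
Proof. by apply: eq_bigr => z _; rewrite !glue_restr. Qed.

Lemma ptrace_glue {I : finType} (S : {set I}) (X : qop I) x y z :
  ptrace S X x y = ptrace_cfg S X (glue S x z) (glue S y z).
Proof. by rewrite /ptrace_cfg !restr_glue. Qed.

Lemma trace_ptrace {I : finType} (S : {set I}) (X : qop I) :
  \sum_x ptrace S X x x = \sum_u X u u.
Proof. by rewrite (sum_glue S). Qed.

Lemma ptrace_setT {I : finType} (X : qop I) u v :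
  ptrace_cfg setT X u v = X u v.
Proof.
rewrite ptrace_cfgE (big_pred1 cfg0) => [|z].
  by congr X; apply/ffunP => i; rewrite !ffunE inE.
apply/vanishes_onP/eqP => [z0|->]; last by move=> i _; rewrite ffunE.
by apply/ffunP => i; rewrite ffunE z0 ?inE.
Qed.

Lemma sum_vanishes_on_split {I : finType} (S M : {set I}) (F : cfg I -> C) :
  S \subset M ->
  \sum_(z | vanishes_on S z) F z =
  \sum_(w | vanishes_on (S :|: ~: M) w) \sum_(z | vanishes_on M z) F (splice M w z).
Proof.
move=> SM; rewrite pair_big_dep /=.
rewrite (reindex_onto (fun p : cfg I * cfg I => splice M p.1 p.2)
                      (fun z => (splice M z cfg0, splice M cfg0 z))) /=; last first.
  by move=> z _; apply/ffunP => i; rewrite !ffunE; case: (i \in M).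
apply: eq_bigl => -[w z] /=; apply/idP/idP.
  case/andP => /vanishes_onP wz0 /eqP [Ew Ez]; apply/andP; split;
    apply/vanishes_onP => i Si.
  - rewrite -Ew ffunE; case/setUP: Si => [Si|].
      by rewrite (subsetP SM _ Si) -(wz0 _ Si) ffunE (subsetP SM _ Si).
    by rewrite inE => /negbTE ->; rewrite ffunE.
  - by rewrite -Ez ffunE Si ffunE.
case/andP => /vanishes_onP w0 /vanishes_onP z0; apply/andP; split.
  apply/vanishes_onP => i Si; rewrite ffunE (subsetP SM _ Si); apply: w0.
  by rewrite inE Si.
apply/eqP; congr (_, _); apply/ffunP => i; rewrite !ffunE;
  case: (boolP (i \in M)) => Mi //=.
- by rewrite w0 // in_setU in_setC Mi orbT.
- by rewrite z0.
Qed.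

Lemma ptrace_cfg_split {I : finType} (S M : {set I}) (X : qop I) u v :
  S \subset M ->
  ptrace_cfg S X u v =
  \sum_(w | vanishes_on (S :|: ~: M) w) ptrace_cfg M X (splice S u w) (splice S v w).
Proof.
move=> SM; rewrite ptrace_cfgE (sum_vanishes_on_split _ SM).
apply: eq_bigr => w _; rewrite ptrace_cfgE; apply: eq_bigr => z _.
have E a : splice M (splice S a w) z = splice S a (splice M w z).
  apply/ffunP => i; rewrite !ffunE.
  by case: (boolP (i \in S)) => Si; [rewrite (subsetP SM _ Si) | case: ifP].
by rewrite !E.
Qed.

Lemma swapcfgK {I : finType} (a b : I) : involutive (swapcfg a b).
Proof. by move=> x; apply/ffunP => i; rewrite !ffunE tpermK. Qed.

Lemma mem_tperm_imset {I : finType} (a b : I) (S : {set I}) i :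
  (i \in tperm a b @: S) = (tperm a b i \in S).
Proof. by rewrite (can_imset_pre _ (tpermK a b)) inE. Qed.

Lemma ptrace_cfg_tperm {I : finType} (S : {set I}) (X : qop I) (a b : I) u v :
  (forall x y, X (swapcfg a b x) (swapcfg a b y) = X x y) ->
  ptrace_cfg S X u v =
  ptrace_cfg (tperm a b @: S) X (swapcfg a b u) (swapcfg a b v).
Proof.
move=> Xsw; rewrite !ptrace_cfgE (reindex_inj (inv_inj (swapcfgK a b))) /=.
apply: eq_big => [z|z _].
  apply/vanishes_onP/vanishes_onP => z0 i.
    by rewrite mem_tperm_imset => /z0; rewrite ffunE tpermK.
  by move=> Si; rewrite ffunE; apply: z0; rewrite mem_tperm_imset tpermK.
have E x : splice (tperm a b @: S) (swapcfg a b x) z =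
           swapcfg a b (splice S x (swapcfg a b z)).
  by apply/ffunP => i; rewrite !ffunE mem_tperm_imset tpermK.
by rewrite !E Xsw.
Qed.

Lemma ptrace_cfg_swap_in {I : finType} (T : {set I}) (X : qop I) (a b : I) :
  a \in T -> b \in T -> (forall x y, X (swapcfg a b x) y = X x y) ->
  forall u v, ptrace_cfg T X (swapcfg a b u) v = ptrace_cfg T X u v.
Proof.
move=> aT bT Xsw u v; rewrite !ptrace_cfgE; apply: eq_bigr => z _.
rewrite -[in RHS]Xsw; congr X; apply/ffunP => i; rewrite !ffunE.
case: (boolP (i \in T)) => iT.
  by case: (tpermP a b i) => [_|_|_ _]; rewrite ?aT ?bT ?iT.
have ia : i != a by apply: contraNneq iT => ->.
have ib : i != b by apply: contraNneq iT => ->.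
by rewrite tpermD 1?eq_sym // (negbTE iT).
Qed.

End PartialTraces.

Section Mixtures.
Context {R : realType}.
Local Notation C := (R[i]).
Local Notation qvec := (@qvec R).
Local Notation qop := (@qop R).

Lemma sum_support {J : finType} (P P' : pred J) (F : J -> C) :
  (forall t, P' t -> P t) -> (forall t, P t -> ~~ P' t -> F t = 0) ->
  \sum_(t | P' t) F t = \sum_(t | P t) F t.
Proof.
move=> P'P F0; rewrite [RHS](bigID P') /= [X in _ + X]big1 ?addr0.
  by apply: eq_bigl => t; apply/idP/idP => [Pt|/andP[]//]; rewrite Pt P'P.
by move=> t /andP[]; apply: F0.
Qed.

Lemma sqnorm_ge0 {I : finType} (phi : qvec I) : 0 <= \sum_x (phi x)^* * phi x.
Proof. by apply: sumr_ge0 => x _; rewrite mulrC mul_conjC_ge0. Qed.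

Lemma sqnorm_eq0 {I : finType} (phi : qvec I) :
  \sum_x (phi x)^* * phi x = 0 -> forall x, phi x = 0.
Proof.
move=> phi0 x.
have ge0 y : true -> 0 <= (phi y)^* * phi y by rewrite mulrC mul_conjC_ge0.
have /eqP := psumr_eq0P ge0 phi0 (i := x) isT.
by rewrite mulrC mul_conjC_eq0 => /eqP.
Qed.

Lemma conv_pure_sub {I : finType} (P Q : qvec I -> Prop) (X : qop I) :
  (forall psi, P psi -> Q psi) -> conv_pure P X -> conv_pure Q X.
Proof.
move=> PQ [m [p [psi [p0 p1 Ppsi Xdef]]]]; exists m, p, psi; split => //.
by move=> j; have [? /PQ] := Ppsi j.
Qed.

Lemma conv_pure_eq {I : finType} (Q : qvec I -> Prop) (X Y : qop I) :
  (forall x y, X x y = Y x y) -> conv_pure Q X -> conv_pure Q Y.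
Proof.
move=> XY [m [p [psi [p0 p1 Qpsi Xdef]]]]; exists m, p, psi; split => //.
by move=> x y; rewrite -XY.
Qed.

Lemma conv_pure_trace {I : finType} (Q : qvec I -> Prop) (X : qop I) :
  conv_pure Q X -> \sum_u X u u = 1.
Proof.
case=> m [p [psi [_ p1 Qpsi Xdef]]].
under eq_bigr do rewrite Xdef.
rewrite exchange_big /= -p1; apply: eq_bigr => j _; have [psi1 _] := Qpsi j.
by rewrite -mulr_sumr -[RHS]mulr1 -psi1; congr (_ * _); apply: eq_bigr => x _;
  rewrite /proj mulrC.
Qed.

(* The phi t need not be normalised and may vanish; conv_pure requires unit vectors. *)
Lemma conv_pure_mixture {I J : finType} (Q : qvec I -> Prop) (P : pred J)
  (w : J -> C) (phi : J -> qvec I) (X : qop I) :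
  (forall (c : C) v, Q v -> Q (fun x => c * v x)) ->
  (forall t, P t -> Q (phi t)) ->
  (forall t, P t -> 0 <= w t) ->
  (forall x y, X x y = \sum_(t | P t) w t * phi t x * (phi t y)^*) ->
  \sum_x X x x = 1 ->
  conv_pure Q X.
Proof.
move=> Qscale Qphi w0 Xdef tr1.
pose nn t := \sum_x (phi t x)^* * phi t x.
pose A t := P t && (w t * nn t != 0).
have PA t : A t -> P t by case/andP.
have zero t : P t -> ~~ A t -> forall x, w t * phi t x = 0.
  move=> Pt; rewrite /A Pt /= negbK mulf_eq0 => /orP [/eqP -> x|/eqP nn0 x].
    by rewrite mul0r.
  by rewrite (sqnorm_eq0 nn0) mulr0.
have sq_neq0 t : A t -> sqrtC (nn t) != 0.
  by case/andP => _; rewrite mulf_eq0 negb_or sqrtC_eq0 => /andP[].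
have sq_conj t : (sqrtC (nn t))^* = sqrtC (nn t).
  by rewrite geC0_conj // sqrtC_ge0 sqnorm_ge0.
exists #|A|, (fun j => w (enum_val j) * nn (enum_val j)),
  (fun j x => (sqrtC (nn (enum_val j)))^-1 * phi (enum_val j) x).
split.
- by move=> j; have /PA Pj := enum_valP j; rewrite mulr_ge0 ?w0 ?sqnorm_ge0.
- rewrite -(big_enum_val (fun t => w t * nn t)) /=.
  rewrite (@sum_support _ P A) //; last first.
    move=> t Pt nAt; rewrite /nn mulr_sumr big1 // => x _.
    by rewrite mulrA mulrAC (zero t Pt nAt) mul0r.
  rewrite -tr1 /nn; under eq_bigr do rewrite mulr_sumr.
  rewrite exchange_big /=; apply: eq_bigr => x _; rewrite Xdef.
  by apply: eq_bigr => t _; rewrite mulrA mulrAC [_ * phi t x]mulrC.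
- move=> j; split; last by apply: Qscale; exact: (Qphi _ (PA _ (enum_valP j))).
  have Aj := enum_valP j; set t := enum_val j in Aj *.
  rewrite /unit_vec.
  have -> : \sum_x ((sqrtC (nn t))^-1 * phi t x)^* * ((sqrtC (nn t))^-1 * phi t x)
     = (sqrtC (nn t))^-1 ^+ 2 * nn t.
    rewrite /nn mulr_sumr; apply: eq_bigr => x _.
    by rewrite rmorphM /= fmorphV /= sq_conj; ring.
  by rewrite exprVn sqrtCK mulVf // -sqrtC_eq0 sq_neq0.
- move=> x y; rewrite Xdef -(@sum_support _ P A) //; last first.
    by move=> t Pt nAt; rewrite (zero t Pt nAt) mul0r.
  rewrite (big_enum_val (A := A)) /=; apply: eq_bigr => j _; rewrite /proj.
  have Aj := enum_valP j; set t := enum_val j in Aj *.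
  have nn_neq0 := sq_neq0 t Aj; rewrite rmorphM /= fmorphV /= sq_conj.
  move: (sqrtCK (nn t)) nn_neq0; set s := sqrtC (nn t) => <- s0.
  by field.
Qed.

(* Decompositions may carry components of weight zero, which need not satisfy Q. *)
Lemma conv_pure_support {I : finType} (Q : qvec I -> Prop) (X : qop I) m
  (p : 'I_m -> C) (psi : 'I_m -> qvec I) :
  (forall (c : C) v, Q v -> Q (fun x => c * v x)) ->
  (forall j, 0 <= p j) -> \sum_j p j = 1 -> (forall j, unit_vec (psi j)) ->
  (forall x y, X x y = \sum_j p j * proj (psi j) x y) ->
  (forall j, p j != 0 -> Q (psi j)) -> conv_pure Q X.
Proof.
move=> Qscale p0 p1 psi1 Xdef Qpsi.
apply: (@conv_pure_mixture I 'I_m Q (fun j => p j != 0) p psi X Qscale Qpsi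
  (fun j _ => p0 j)).
  move=> x y; rewrite Xdef (@sum_support _ xpredT (fun j => p j != 0)) //.
    by apply: eq_bigr => j _; rewrite /proj mulrA.
  by move=> t _; rewrite negbK => /eqP ->; rewrite !mul0r.
by apply: (@conv_pure_trace _ xpredT); exists m, p, psi.
Qed.

Lemma density_mixture {I J : finType} (P : pred J) (w : J -> C)
  (phi : J -> qvec I) (X : qop I) :
  (forall t, P t -> 0 <= w t) ->
  (forall x y, X x y = \sum_(t | P t) w t * phi t x * (phi t y)^*) ->
  \sum_x X x x = 1 -> density X.
Proof.
move=> w0 Xdef tr1; split; [|split=> //].
  move=> x y; rewrite !Xdef rmorph_sum /=; apply: eq_bigr => t Pt.
  by rewrite !rmorphM /= conjCK (geC0_conj (w0 t Pt)); ring.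
move=> v.
pose a t := \sum_y (phi t y)^* * v y.
have -> : \sum_x \sum_y (v x)^* * X x y * v y = \sum_(t | P t) w t * ((a t)^* * a t).
  have E x y : (v x)^* * X x y * v y =
     \sum_(t | P t) w t * phi t x * (phi t y)^* * (v x)^* * v y.
    by rewrite Xdef mulr_sumr mulr_suml; apply: eq_bigr => t _; ring.
  under eq_bigr do under eq_bigr do rewrite E.
  under eq_bigr do rewrite exchange_big /=.
  rewrite exchange_big /=; apply: eq_bigr => t _.
  rewrite /a rmorph_sum /= mulr_suml mulr_sumr; apply: eq_bigr => x _.
  rewrite mulr_sumr mulr_sumr; apply: eq_bigr => y _.
  by rewrite rmorphM /= conjCK; ring.
apply: sumr_ge0 => t Pt; apply: mulr_ge0; first exact: w0.
by rewrite mulrC mul_conjC_ge0.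
Qed.

Lemma ptrace_density {I : finType} (S : {set I}) (X : qop I) :
  density X -> density (ptrace S X).
Proof.
case=> Xherm [Xpos tr1]; split; [|split; last by rewrite trace_ptrace].
  move=> x y; rewrite /ptrace rmorph_sum /=; apply: eq_bigr => z _; exact: Xherm.
move=> v.
pose V z u := if splice S cfg0 u == z then v (restr S u) else 0.
suff -> : \sum_x \sum_y (v x)^* * ptrace S X x y * v y =
   \sum_(z | vanishes_on S z) \sum_u \sum_u' (V z u)^* * X u u' * V z u'.
  by apply: sumr_ge0 => z _; apply: Xpos.
have E x y : (v x)^* * ptrace S X x y * v y =
   \sum_(z | vanishes_on S z) (v x)^* * X (glue S x z) (glue S y z) * v y.
  by rewrite /ptrace mulr_sumr mulr_suml.
under eq_bigr do under eq_bigr do rewrite E.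
under eq_bigr do rewrite exchange_big /=.
rewrite exchange_big /=; apply: eq_bigr => z z0.
rewrite (sum_glue_at (S := S) (z := z)) //; last first.
  by move=> u ne; rewrite big1 // => u' _; rewrite /V (negbTE ne) conjC0 !mul0r.
apply: eq_bigr => x _.
rewrite (sum_glue_at (S := S) (z := z)) //; last first.
  by move=> u ne; rewrite /V (negbTE ne) mulr0.
by apply: eq_bigr => y _; rewrite /V !splice_glue // eqxx !restr_glue.
Qed.

(* The defect sum_t w_t |phi_t x - phi_t (s x)|^2 equals
   X(x,x) - X(x,s x) - X(s x,x) + X(s x,s x), which vanishes. *)
Lemma mixture_component_invariant {I J : finType} (P : pred J) (X : qop I)
  (w : J -> C) (phi : J -> qvec I) (s : cfg I -> cfg I) :
  (forall t, P t -> 0 <= w t) ->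
  (forall x y, X x y = \sum_(t | P t) w t * phi t x * (phi t y)^*) ->
  (forall x y, X (s x) y = X x y) ->
  forall t x, P t -> w t != 0 -> phi t (s x) = phi t x.
Proof.
move=> w0 Xdef Xs t x Pt wt.
pose d t := phi t x - phi t (s x).
have defect0 : \sum_(t | P t) w t * (d t * (d t)^*) = 0.
  have -> : \sum_(t | P t) w t * (d t * (d t)^*) =
     X x x - X x (s x) - X (s x) x + X (s x) (s x).
    rewrite !Xdef -!sumrB -big_split /=; apply: eq_bigr => t' _.
    by rewrite /d rmorphB /=; ring.
  by rewrite !Xs; ring.
have := psumr_eq0P (fun t Pt => mulr_ge0 (w0 t Pt) (mul_conjC_ge0 (d t))) defect0 Pt.
by move/eqP; rewrite mulf_eq0 (negbTE wt) /= mul_conjC_eq0 subr_eq0 => /eqP ->.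
Qed.

End Mixtures.

Section TensorPowers.
Context {R : realType}.
Local Notation C := (R[i]).
Local Notation qvec := (@qvec R).

Definition weight {I : finType} (x : cfg I) := #|[set i | x i]|.

Definition cfg_of_set {I : finType} (B : {set I}) : cfg I := [ffun i => i \in B].

Lemma weight_cfg_of_set {I : finType} (B : {set I}) : weight (cfg_of_set B) = #|B|.
Proof.
by rewrite /weight (_ : [set i | _] = B) //; apply/setP => i; rewrite inE ffunE.
Qed.

Lemma weight_swap {I : finType} (a b : I) x : weight (swapcfg a b x) = weight x.
Proof.
rewrite /weight (_ : [set k | swapcfg a b x k] = tperm a b @: [set k | x k]).
  by rewrite card_imset //; apply: perm_inj.
by apply/setP => k; rewrite mem_tperm_imset !inE ffunE.
Qed.

Lemma weight_le_card {I : finType} (x : cfg I) : (weight x <= #|I|)%N.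
Proof. exact: max_card. Qed.

(* Induction on the number of positions where x and y differ: one transposition
   of a position in x \ y with one in y \ x decreases it. *)
Lemma symmetric_vec_weight {I : finType} (psi : qvec I) :
  symmetric_vec psi -> forall x y, weight x = weight y -> psi x = psi y.
Proof.
move=> psi_sym x y.
move: {2}#|[set i | x i != y i]| (leqnn #|[set i | x i != y i]|) => N.
elim: N x => [|N IH] x diffN wxy.
  move: diffN; rewrite leqn0 cards_eq0 => /eqP diff0.
  congr psi; apply/ffunP => i; apply/eqP; apply/negPn/negP => xyi.
  by have := in_set0 i; rewrite -diff0 inE xyi.
case: (eqVneq x y) => [->//|xy].
have neq : [set i | x i] != [set i | y i].
  apply: contra xy => /eqP E; apply/eqP/ffunP => i.
  by move/setP: E => /(_ i); rewrite !inE; case: (x i); case: (y i).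
have nsub (A B : {set I}) : A != B -> #|A| = #|B| -> ~~ (A \subset B).
  by move=> AB cardAB; apply: contra AB => AsB; rewrite eqEcard AsB cardAB /=.
case/subsetPn: (nsub _ _ neq wxy) => i; rewrite !inE => xi yi.
case/subsetPn: (nsub _ _ (contra_neq esym neq) (esym wxy)) => j.
rewrite !inE => yj xj.
have ij : i != j by apply: contraNneq xj => <-.
rewrite -(psi_sym i j x); apply: IH; last by rewrite weight_swap.
rewrite -ltnS; apply: leq_trans diffN; apply: proper_card; apply/properP; split.
  apply/subsetP => k; rewrite !inE ffunE.
  case: (tpermP i j k) => [->|->|ki kj] //.
  - by rewrite (negbTE xj) (negbTE yi).
  - by rewrite xi yj.
exists i; first by rewrite inE xi (negbTE yi).
by rewrite inE ffunE tpermL (negbTE xj) (negbTE yi).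
Qed.

(* 0 when w > #|I|, where there is no configuration of weight w. *)
Definition weight_profile {I : finType} (psi : qvec I) (w : nat) : C :=
  if [pick B : {set I} | #|B| == w] is Some B then psi (cfg_of_set B) else 0.

Lemma symmetric_vec_profile {I : finType} (psi : qvec I) :
  symmetric_vec psi -> forall x, psi x = weight_profile psi (weight x).
Proof.
move=> psi_sym x; rewrite /weight_profile; case: pickP => [B /eqP wB|none].
  by apply: symmetric_vec_weight => //; rewrite weight_cfg_of_set wB.
by have := none [set i | x i]; rewrite eqxx.
Qed.

Lemma exists_subset_card {I : finType} (A : {set I}) p :
  (p <= #|A|)%N -> exists2 B : {set I}, B \subset A & #|B| = p.
Proof.
elim: p => [_|p IH lepA]; first by exists set0; rewrite ?sub0set ?cards0.
have [B BA cardB] := IH (ltnW lepA).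
have : ~~ (A \subset B) by apply/negP => /subset_leq_card; rewrite cardB leqNgt lepA.
case/subsetPn => x xA xB; exists (x |: B); first by rewrite subUset sub1set xA BA.
by rewrite cardsU1 xB cardB.
Qed.

(* The hypothesis says that the Hankel matrix (f (p + q))_(p <= s, q <= t) has
   rank at most one. *)
Lemma hankel_geometric (f : nat -> C) (s t : nat) : (0 < s)%N -> (0 < t)%N ->
  (forall p p' q q', (p <= s)%N -> (p' <= s)%N -> (q <= t)%N -> (q' <= t)%N ->
     f (p + q)%N * f (p' + q')%N = f (p + q')%N * f (p' + q)%N) ->
  (exists c r, forall w, (w <= s + t)%N -> f w = c * r ^+ w) \/
  (forall w, (w < s + t)%N -> f w = 0).
Proof.
move=> s0 t0 minor.
have logconv w : (0 < w)%N -> (w < s + t)%N -> f w ^+ 2 = f w.-1 * f w.+1.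
  move=> w0 wN; pose p := minn w.-1 s.-1; pose q := (w - p)%N.
  have := minor p p.+1 q q.-1.
  have -> : (p + q = w)%N by rewrite /q /p; lia.
  have -> : (p.+1 + q.-1 = w)%N by rewrite /q /p; lia.
  have -> : (p + q.-1 = w.-1)%N by rewrite /q /p; lia.
  have -> : (p.+1 + q = w.+1)%N by rewrite /q /p; lia.
  by rewrite expr2; apply; rewrite /q /p; lia.
have [f1|f1] := eqVneq (f 1%N) 0.
  have f0_inner w : (0 < w)%N -> (w < s + t)%N -> f w = 0.
    elim: w => [//|w IH] _ wN; have [->//|w0] := posnP w.
    have := logconv w.+1 isT wN; rewrite /= (IH w0 (ltnW wN)) mul0r.
    by move/eqP; rewrite expf_eq0 /= => /eqP.
  have := minor s 0%N 0%N t (leqnn _) (leq0n _) (leq0n _) (leqnn _).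
  rewrite !addn0 !add0n (f0_inner s) ?mul0r; [|done|lia].
  have [f0|f0] := eqVneq (f 0%N) 0 => fst.
    by right => w wN; have [->//|w0] := posnP w; apply: f0_inner.
  left; exists (f 0%N), 0 => w wN; have [->|w0] := posnP w.
    by rewrite expr0 mulr1.
  rewrite expr0n (gtn_eqF w0) mulr0.
  case: (ltngtP w (s + t)) wN => // [wl _|-> _]; first exact: f0_inner.
  by move/esym/eqP: fst; rewrite mulf_eq0 (negbTE f0) orbF => /eqP.
have f0 : f 0%N != 0.
  apply/eqP => f0; have := logconv 1%N isT; rewrite /= f0 mul0r => f1sq.
  have /eqP : f 1%N ^+ 2 = 0 by apply: f1sq; lia.
  by rewrite expf_eq0 /= (negbTE f1).
left; exists (f 0%N), (f 1%N / f 0%N).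
have r0 : f 1%N / f 0%N != 0 by rewrite mulf_eq0 invr_eq0 negb_or f1 f0.
suff geom w : (w.+1 <= s + t)%N ->
   f w = f 0%N * (f 1%N / f 0%N) ^+ w /\ f w.+1 = f 0%N * (f 1%N / f 0%N) ^+ w.+1.
  by case=> [|w] wN; [rewrite expr0 mulr1 | case: (geom w wN)].
elim: w => [_|w IH wN]; first by split; [rewrite expr0 mulr1 | rewrite expr1; field].
have [IH1 IH2] := IH (ltnW wN); split => //.
have := logconv w.+1 isT wN; rewrite /= IH1 IH2 => E.
have nz : f 0%N * (f 1%N / f 0%N) ^+ w != 0 by rewrite mulf_neq0 // expf_neq0.
by apply: (mulfI nz); rewrite -E !exprS expr0; ring.
Qed.

Definition tensor_power {I : finType} (psi : qvec I) : Prop :=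
  exists (c : C) (b : bool -> C), forall x, psi x = c * \prod_i b (x i).

Lemma tensor_power_scale {I : finType} (c : C) (psi : qvec I) :
  tensor_power psi -> tensor_power (fun x => c * psi x).
Proof. by case=> c' [b psiE]; exists (c * c'), b => x; rewrite psiE mulrA. Qed.

Lemma prod_split {I : finType} (S : {set I}) (F : I -> C) :
  \prod_i F i = \prod_(j : sub S) F (val j) * \prod_(j : sub (~: S)) F (val j).
Proof.
rewrite (bigID (fun i => i \in S)) /= -!big_sub; congr (_ * _).
by apply: eq_bigl => i; rewrite in_setC.
Qed.

Lemma tensor_power_fullsep {I : finType} (psi : qvec I) :
  tensor_power psi -> pure_fullsep psi.
Proof.
case=> c [b psiE] S; exists (fun x => c * \prod_(j : sub S) b (x j)),
  (fun x => \prod_(j : sub (~: S)) b (x j)) => x.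
by rewrite psiE (prod_split S) mulrA; congr (_ * _ * _); apply: eq_bigr => j _;
  rewrite ffunE.
Qed.

Lemma tensor_power_glue {I : finType} (S : {set I}) z (psi : qvec I) :
  tensor_power psi -> tensor_power (fun x : cfg (sub S) => psi (glue S x z)).
Proof.
case=> c [b psiE]; exists (c * \prod_(j : sub (~: S)) b (z (val j))), b => x.
have inS : \prod_(j : sub S) b (glue S x z (val j)) = \prod_(j : sub S) b (x j).
  by apply: eq_bigr => j _; rewrite glue_in.
have offS : \prod_(j : sub (~: S)) b (glue S x z (val j)) =
            \prod_(j : sub (~: S)) b (z (val j)).
  by apply: eq_bigr => j _; rewrite glue_out.
by rewrite psiE (prod_split S) inS offS; ring.
Qed.

Lemma sep_wrt_exchange {I : finType} (S : {set I}) (psi : qvec I) :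
  sep_wrt S psi -> forall x y, psi x * psi y = psi (splice S x y) * psi (splice S y x).
Proof.
case=> al [be psiE] x y.
have restrS u v : restr S (splice S u v) = restr S u.
  by apply/ffunP => j; rewrite !ffunE (valP j).
have restrC u v : restr (~: S) (splice S u v) = restr (~: S) v.
  by apply/ffunP => j; rewrite !ffunE; have := valP j; rewrite inE => /negbTE ->.
by rewrite !psiE !restrS !restrC; ring.
Qed.

Lemma splice_cfg_of_set {I : finType} (S A1 A2 A1' A2' : {set I}) :
  A1 \subset S -> A2 \subset ~: S -> A1' \subset S -> A2' \subset ~: S ->
  splice S (cfg_of_set (A1 :|: A2)) (cfg_of_set (A1' :|: A2')) = cfg_of_set (A1 :|: A2').
Proof.
move=> /subsetP h1 /subsetP h2 /subsetP h1' /subsetP h2'.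
apply/ffunP => i; rewrite !ffunE !inE.
have [iS|iS] := boolP (i \in S).
  have n2 : i \notin A2 by apply/negP => /h2; rewrite inE iS.
  have n2' : i \notin A2' by apply/negP => /h2'; rewrite inE iS.
  by rewrite (negbTE n2) (negbTE n2').
have n1 : i \notin A1 by apply/negP => /h1; rewrite (negbTE iS).
have n1' : i \notin A1' by apply/negP => /h1'; rewrite (negbTE iS).
by rewrite (negbTE n1) (negbTE n1').
Qed.

Lemma card_setU_split {I : finType} (S B1 B2 : {set I}) :
  B1 \subset S -> B2 \subset ~: S -> #|B1 :|: B2| = (#|B1| + #|B2|)%N.
Proof.
move=> /subsetP h1 /subsetP h2; apply/eqP; rewrite (leq_card_setU B1 B2).
by apply/pred0P => i /=; apply/negP => /andP [/h1 iS /h2]; rewrite inE iS.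
Qed.

(* Realise weights p + q by configurations with p ones in S and q ones off S. *)
Lemma sep_profile_hankel {I : finType} (S : {set I}) (psi : qvec I) :
  symmetric_vec psi -> sep_wrt S psi ->
  forall p p' q q', (p <= #|S|)%N -> (p' <= #|S|)%N ->
    (q <= #|~: S|)%N -> (q' <= #|~: S|)%N ->
    weight_profile psi (p + q) * weight_profile psi (p' + q') =
    weight_profile psi (p + q') * weight_profile psi (p' + q).
Proof.
move=> psi_sym psi_sep p p' q q' hp hp' hq hq'.
have [B1 B1S <-] := exists_subset_card hp.
have [B1' B1S' <-] := exists_subset_card hp'.
have [B2 B2S <-] := exists_subset_card hq.
have [B2' B2S' <-] := exists_subset_card hq'.
have profileE (A1 A2 : {set I}) : A1 \subset S -> A2 \subset ~: S ->
    weight_profile psi (#|A1| + #|A2|) = psi (cfg_of_set (A1 :|: A2)).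
  move=> h1 h2.
  by rewrite (symmetric_vec_profile psi_sym) weight_cfg_of_set (card_setU_split h1 h2).
rewrite !profileE // (sep_wrt_exchange psi_sep).
by rewrite (splice_cfg_of_set B1S B2S B1S' B2S') (splice_cfg_of_set B1S' B2S' B1S B2S).
Qed.

Lemma prod_if_pow {I : finType} (x : cfg I) (r : C) :
  \prod_i (if x i then r else 1) = r ^+ weight x.
Proof. by rewrite -big_mkcond /= -prodr_const; apply: eq_bigl => i; rewrite inE. Qed.

(* In the degenerate case of the Hankel lemma psi is supported on 1...1. *)
Lemma symmetric_sep_tensor_power {I : finType} (psi : qvec I) (S : {set I}) :
  symmetric_vec psi -> sep_wrt S psi -> S != set0 -> S != setT ->
  tensor_power psi.
Proof.
move=> psi_sym psi_sep S0 ST.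
have s0 : (0 < #|S|)%N by rewrite card_gt0.
have t0 : (0 < #|~: S|)%N.
  by rewrite card_gt0; apply: contraNneq ST => S1; rewrite -(setCK S) S1 setC0.
have cardI : (#|S| + #|~: S| = #|I|)%N by rewrite cardsC.
case: (hankel_geometric s0 t0 (sep_profile_hankel psi_sym psi_sep)) => [[c [r fE]]|f0].
  exists c, (fun b => if b then r else 1) => x.
  by rewrite prod_if_pow (symmetric_vec_profile psi_sym) fE // cardI weight_le_card.
exists (weight_profile psi #|I|), (fun b => if b then 1 else 0) => x.
rewrite (symmetric_vec_profile psi_sym); have [/forallP x1|] := boolP [forall i, x i].
  have -> : weight x = #|I|.
    rewrite /weight -cardsT (_ : [set i | x i] = setT) //.
    by apply/setP => i; rewrite !inE x1.
  by rewrite big1 ?mulr1 // => i _; rewrite x1.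
rewrite negb_forall => /existsP [i xi].
rewrite (bigD1 i) //= (negbTE xi) mul0r mulr0 f0 // cardI.
rewrite /weight -cardsT; apply: proper_card; rewrite properT.
by apply/negP => /eqP/setP/(_ i); rewrite !inE (negbTE xi).
Qed.

End TensorPowers.

Section UpperBound.
Context {R : realType}.
Local Notation qop := (@qop R).

Lemma symmetric_state_swap_row {I : finType} (rho : qop I) :
  symmetric_state rho -> forall a b x y, rho (swapcfg a b x) y = rho x y.
Proof.
case=> _ rho_sym a b x y.
have col x' : apply_op rho (fun z => if z == y then 1 else 0) x' = rho x' y.
  rewrite /apply_op (bigD1 y) //= eqxx mulr1 big1 ?addr0 // => z /negbTE ->.
  by rewrite mulr0.
by rewrite -!col rho_sym.
Qed.

Lemma symmetric_state_swap {I : finType} (rho : qop I) :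
  symmetric_state rho -> forall a b x y,
    rho (swapcfg a b x) (swapcfg a b y) = rho x y.
Proof.
move=> rho_sym a b x y; have [[herm _] _] := rho_sym.
by rewrite symmetric_state_swap_row // herm symmetric_state_swap_row // -herm.
Qed.

Lemma ptrace_conv_tensor_power {I : finType} (S : {set I}) (X : qop I) :
  conv_pure tensor_power X -> conv_pure tensor_power (ptrace S X).
Proof.
move=> X_conv; have tr1 := conv_pure_trace X_conv.
case: X_conv => m [p [psi [p0 p1 psi_pow Xdef]]].
apply: (@conv_pure_mixture _ _ ('I_m * cfg I)%type tensor_power
   (fun t => vanishes_on S t.2) (fun t => p t.1) (fun t x => psi t.1 (glue S x t.2))).
- by move=> c v; apply: tensor_power_scale.
- by move=> t _; apply: tensor_power_glue; have [_ ?] := psi_pow t.1.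
- by move=> t _; apply: p0.
- move=> x y; rewrite /ptrace; under eq_bigr do rewrite Xdef.
  rewrite exchange_big /= pair_big_dep /=.
  by apply: eq_bigr => t _; rewrite /proj mulrA.
- by rewrite trace_ptrace.
Qed.

(* Each pure component psi_j of sigma is swap-invariant in a, b: it is (up to
   gluing) a component of the marginal of sigma on a set T containing a and b,
   and that marginal is rho's, which is swap-invariant. *)
Lemma compatible_bisep_tensor_power {I : finType} (rho sigma : qop I)
  (Sc : {set {set I}}) :
  symmetric_state rho ->
  (forall a b : I, exists2 T, T \in Sc & (a \in T) && (b \in T)) ->
  compatible rho Sc sigma -> biseparable sigma -> conv_pure tensor_power sigma.
Proof.
move=> rho_sym cover [_ marg] [m [p [psi [p0 p1 psi_bisep sigmaE]]]].
apply: (conv_pure_support (psi := psi)) => //.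
- by move=> c v; apply: tensor_power_scale.
- by move=> j; have [] := psi_bisep j.
move=> j pj; have [_ [S [S0 ST psi_sep]]] := psi_bisep j.
apply: (symmetric_sep_tensor_power _ psi_sep) => // a b x.
have [T TSc /andP [aT bT]] := cover a b.
have outT i : i \notin T -> tperm a b i = i.
  move=> iT; have ia : i != a by apply: contraNneq iT => ->.
  by rewrite tpermD 1?eq_sym //; apply: contraNneq iT => ->.
pose z := splice T cfg0 x.
have z0 : vanishes_on T z by apply/vanishes_onP => i Ti; rewrite ffunE Ti ffunE.
have E1 : splice T x z = x by apply/ffunP => i; rewrite !ffunE; case: (i \in T).
have E2 : splice T (swapcfg a b x) z = swapcfg a b x.
  apply/ffunP => i; rewrite !ffunE; have [//|iT] := boolP (i \in T).
  by rewrite outT.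
have := @mixture_component_invariant _ I ('I_m * cfg I)%type
   (fun t => vanishes_on T t.2) (ptrace_cfg T sigma)
   (fun t => p t.1) (fun t u => psi t.1 (splice T u t.2)) (swapcfg a b)
   (fun t _ => p0 t.1) _ _ (j, z) x z0 pj.
rewrite /= E1 E2; apply.
- move=> u v; rewrite ptrace_cfgE.
  rewrite (eq_bigr (fun z => \sum_j p j * proj (psi j) (splice T u z) (splice T v z)));
    last by move=> z' _; rewrite sigmaE.
  rewrite exchange_big /= pair_big_dep /=.
  by apply: eq_bigr => t _; rewrite /proj mulrA.
- move=> u v; rewrite /ptrace_cfg !marg //.
  have := ptrace_cfg_swap_in aT bT (symmetric_state_swap_row rho_sym a b).
  by rewrite /ptrace_cfg => ->.
Qed.

Lemma card_first n k : (k <= n)%N -> #|first n k| = k.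
Proof.
elim: k => [_|k IH kn].
  by apply/eqP; rewrite cards_eq0; apply/eqP/setP => i; rewrite !inE ltn0.
have -> : first n k.+1 = Ordinal kn |: first n k.
  by apply/setP => i; rewrite !inE ltnS leq_eqVlt -val_eqE.
by rewrite cardsU1 IH ?(ltnW kn) // inE /= ltnn.
Qed.

Lemma detects_GME_small_sets n (rho : qop 'I_n) k :
  symmetric_state rho -> (2 <= k <= n)%N ->
  entangled (ptrace (first n k) rho) ->
  detects_GME [set S : {set 'I_n} | (#|S| <= k)%N] rho.
Proof.
move=> rho_sym /andP [k2 kn] rhok_ent sigma sigma_comp sigma_bisep; apply: rhok_ent.
have cover (a b : 'I_n) : exists2 T, T \in [set S : {set 'I_n} | (#|S| <= k)%N] &
    (a \in T) && (b \in T).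
  exists [set a; b]; last by rewrite !inE !eqxx orbT.
  by rewrite inE cards2; apply: leq_trans k2; case: (a != b).
have sigma_pow := compatible_bisep_tensor_power rho_sym cover sigma_comp sigma_bisep.
apply: (conv_pure_sub (@tensor_power_fullsep _ _)).
apply: (conv_pure_eq _ (ptrace_conv_tensor_power (first n k) sigma_pow)) => x y.
by case: sigma_comp => _ ->; rewrite // inE card_first.
Qed.

End UpperBound.

Section SeparableMarginals.
Context {R : realType}.
Local Notation C := (R[i]).
Local Notation qvec := (@qvec R).
Local Notation qop := (@qop R).

Lemma val_tperm {I : finType} (M : {set I}) (a b j : sub M) :
  val (tperm a b j) = tperm (val a) (val b) (val j).
Proof.
case: (tpermP a b j) => [->|->|ja jb]; rewrite ?tpermL ?tpermR //.
rewrite tpermD //; apply/eqP => /val_inj E; [apply: ja | apply: jb]; by rewrite E.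
Qed.

Lemma ptrace_swap_row {I : finType} (M : {set I}) (rho : qop I) :
  (forall a b x y, rho (swapcfg a b x) y = rho x y) ->
  forall (a b : sub M) x y, ptrace M rho (swapcfg a b x) y = ptrace M rho x y.
Proof.
move=> rho_sw a b x y.
have -> : swapcfg a b x = restr M (swapcfg (val a) (val b) (glue M x cfg0)).
  by apply/ffunP => j; do 3 rewrite ffunE; rewrite -val_tperm glue_in.
rewrite -{2}(restr_glue x cfg0) -(restr_glue y cfg0).
exact: (ptrace_cfg_swap_in (valP a) (valP b) (rho_sw _ _)).
Qed.

Lemma fullsep_symmetric_conv_tensor_power {I : finType} (i0 i1 : I) (X : qop I) :
  i0 != i1 ->
  (forall a b x y, X (swapcfg a b x) y = X x y) ->
  conv_pure pure_fullsep X -> conv_pure tensor_power X.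
Proof.
move=> i01 X_sw [m [p [psi [p0 p1 psi_sep Xdef]]]].
apply: (conv_pure_support (psi := psi)) => //.
- by move=> c v; apply: tensor_power_scale.
- by move=> j; have [] := psi_sep j.
move=> j pj; have [_ psi_fs] := psi_sep j.
apply: (@symmetric_sep_tensor_power _ _ _ [set i0]) => //.
- move=> a b x.
  apply: (@mixture_component_invariant _ I 'I_m xpredT X p psi _ (fun t _ => p0 t)) => //.
  by move=> x' y'; rewrite Xdef; apply: eq_bigr => t _; rewrite /proj mulrA.
- by apply/eqP => /setP /(_ i0); rewrite !inE eqxx.
- by apply/eqP => /setP /(_ i1); rewrite !inE eq_sym (negbTE i01).
Qed.

Section OneQubit.
Variables (I : finType) (i0 : I).
Hypothesis single : forall i : I, i = i0.

Let e (b : bool) : cfg I := [ffun => b].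

Let cfgE (x : cfg I) : x = e (x i0).
Proof. by apply/ffunP => i; rewrite ffunE (single i). Qed.

Let sum_qubit (a : bool) (F : cfg I -> C) : \sum_x F x = F (e a) + F (e (~~ a)).
Proof.
rewrite (reindex e); last first.
  by exists (fun x : cfg I => x i0) => [b _|x _]; rewrite ?ffunE // -cfgE.
by rewrite big_bool; case: a => //=; rewrite addrC.
Qed.

Lemma qubit_tensor_power (psi : qvec I) : tensor_power psi.
Proof.
exists 1, (fun b => psi (e b)) => x; rewrite mul1r (bigD1 i0) //= big1 ?mulr1.
  by rewrite -cfgE.
by move=> i; rewrite (single i) eqxx.
Qed.

(* With A = X(a,a) > 0, B = X(a,~a), D = X(~a,~a) and v = A |a> + B^* |~a>,
   X = A^-1 |v><v| + (A D - |B|^2)/A |~a><~a|, and A D - |B|^2 >= 0 by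
   positivity. *)
Lemma qubit_density_conv_tensor_power (X : qop I) :
  density X -> conv_pure tensor_power X.
Proof.
case=> herm [pos tr1].
have [a Aa] : exists a, X (e a) (e a) != 0.
  have [X11|] := eqVneq (X (e true) (e true)) 0; last by exists true.
  exists false; move: tr1; rewrite (sum_qubit true) X11 add0r => ->.
  exact: oner_neq0.
set A := X (e a) (e a) in Aa.
set B := X (e a) (e (~~ a)).
set D := X (e (~~ a)) (e (~~ a)).
have ea b : e b i0 = b by rewrite ffunE.
have ne b : (~~ b == b) = false by case: b.
have BC : X (e (~~ a)) (e a) = B^* by rewrite herm.
have form v : \sum_x \sum_y (v x)^* * X x y * v y =
    (v (e a))^* * A * v (e a) + (v (e a))^* * B * v (e (~~ a)) +
    ((v (e (~~ a)))^* * B^* * v (e a) + (v (e (~~ a)))^* * D * v (e (~~ a))).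
  by rewrite (sum_qubit a) !(sum_qubit a) BC.
have A0 : 0 <= A.
  have := pos (fun x => if x i0 == a then 1 else 0).
  by rewrite form !ea eqxx ne rmorph0 rmorph1 !mulr0 !mul0r !addr0 mulr1 mul1r.
have Ap : 0 < A by rewrite lt_def Aa.
have det0 : 0 <= A * D - B * B^*.
  have := pos (fun x => if x i0 == a then - B else A).
  rewrite form !ea eqxx ne (geC0_conj A0) rmorphN /=.
  have -> : (- B^*) * A * (- B) + (- B^*) * B * A + (A * B^* * (- B) + A * D * A)
     = A * (A * D - B * B^*) by ring.
  by rewrite pmulr_rge0.
pose w t : C := if t then A^-1 else (A * D - B * B^*) / A.
pose phi (t : bool) (x : cfg I) : C :=
  if t then (if x i0 == a then A else B^*) else (if x i0 == a then 0 else 1).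
apply: (@conv_pure_mixture _ I bool tensor_power xpredT w phi) => //.
- by move=> c v; apply: tensor_power_scale.
- by move=> t _; apply: qubit_tensor_power.
- by move=> [] _; rewrite /w ?invr_ge0 ?divr_ge0 // ltW.
move=> x y; rewrite big_bool /w /phi /= (cfgE x) (cfgE y) !ea.
have bcase (u : bool) : u = a \/ u = ~~ a by case: u; case: (a); auto.
have [->|->] := bcase (x i0); have [->|->] := bcase (y i0).
- by rewrite eqxx ?conjC0 ?conjC1 (geC0_conj A0) -/A; field; rewrite Aa.
- by rewrite eqxx ne ?conjC0 ?conjC1 conjCK -/B; field; rewrite Aa.
- by rewrite eqxx ne ?conjC0 ?conjC1 (geC0_conj A0) BC; field; rewrite Aa.
- by rewrite ne ?conjC0 ?conjC1 conjCK -/D; field; rewrite Aa.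
Qed.

End OneQubit.

Lemma sum_prod_vanishes_on {I : finType} (K : {set I}) (G : I -> bool -> C) :
  \sum_(z : cfg I | vanishes_on K z) \prod_i G i (z i) =
  \prod_i (if i \in K then G i false else G i false + G i true).
Proof.
have -> : \prod_i (if i \in K then G i false else G i false + G i true) =
  \prod_i \sum_(b : bool) (if i \in K then (if b then 0 else G i false) else G i b).
  by apply: eq_bigr => i _; case: ifP => _; rewrite big_bool /= ?add0r // addrC.
rewrite bigA_distr_bigA /cfg big_mkcond /=; apply: eq_bigr => z _.
case: ifP => z0.
  apply: eq_bigr => i _; case: ifP => // Ki.
  by move/vanishes_onP: z0 => /(_ i Ki) ->.
move/negbT: z0; rewrite negb_forall; case/existsP => i.
rewrite negb_imply negbK; case/andP => Ki zi.
by rewrite (bigD1 i) //= Ki zi mul0r.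
Qed.

Lemma prod_if_set {I : finType} (K : {set I}) (F : I -> C) (a : C) :
  \prod_i (if i \in K then F i else a) = \prod_(k : sub K) F (val k) * a ^+ #|~: K|.
Proof.
rewrite (bigID (fun i => i \in K)) /=; congr (_ * _).
  by rewrite -big_sub; apply: eq_bigr => i ->.
rewrite -prodr_const; apply: eq_big => [i|i /negbTE ->] //.
by rewrite inE.
Qed.

Definition qubit_sqnorm (b : bool -> C) := b false * (b false)^* + b true * (b true)^*.

Lemma qubit_sqnorm_ge0 (b : bool -> C) : 0 <= qubit_sqnorm b.
Proof. by rewrite addr_ge0 // mul_conjC_ge0. Qed.

Lemma ptrace_tensor_power {I : finType} (K : {set I}) (c : C) (b : bool -> C) u v :
  \sum_(z | vanishes_on K z)
    (c * \prod_i b (splice K u z i)) * (c * \prod_i b (splice K v z i))^*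
  = c * c^* * (\prod_(k : sub K) (b (u (val k)) * (b (v (val k)))^*) *
               qubit_sqnorm b ^+ #|~: K|).
Proof.
pose G i (t : bool) := if i \in K then b (u i) * (b (v i))^* else b t * (b t)^*.
have E z : (c * \prod_i b (splice K u z i)) * (c * \prod_i b (splice K v z i))^*
    = c * c^* * \prod_i G i (z i).
  rewrite rmorphM rmorph_prod /=.
  have -> : \prod_i G i (z i) =
      (\prod_i b (splice K u z i)) * \prod_i (b (splice K v z i))^*.
    by rewrite -big_split /=; apply: eq_bigr => i _; rewrite /G !ffunE; case: (i \in K).
  by ring.
rewrite (eq_bigr _ (fun z _ => E z)) -mulr_sumr sum_prod_vanishes_on; congr (_ * _).
rewrite -(prod_if_set K (fun i => b (u i) * (b (v i))^*)).
by apply: eq_bigr => i _; rewrite /G; case: (i \in K).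
Qed.

Lemma sqnorm_tensor_power {I : finType} (c : C) (b : bool -> C) :
  \sum_(x : cfg I) (c * \prod_i b (x i)) * (c * \prod_i b (x i))^* =
  c * c^* * qubit_sqnorm b ^+ #|I|.
Proof.
have := @ptrace_tensor_power I set0 c b cfg0 cfg0.
have E z : splice set0 cfg0 z = z by apply/ffunP => i; rewrite !ffunE inE.
rewrite (eq_bigl xpredT) => [|z]; last by apply/vanishes_onP => i; rewrite inE.
under eq_bigr do rewrite E.
move=> ->; rewrite setC0 cardsT big1 ?mul1r // => k _.
by have := valP k; rewrite inE.
Qed.

(* Transpositions moving points of S \ M into M \ S reduce to S \subset M, where
   the marginal on S is a partial trace of the marginal on M. *)
Lemma swap_invariant_marginals {I : finType} (M : {set I}) (X Y : qop I) :
  (forall a b x y, X (swapcfg a b x) (swapcfg a b y) = X x y) ->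
  (forall a b x y, Y (swapcfg a b x) (swapcfg a b y) = Y x y) ->
  (forall u v, ptrace_cfg M X u v = ptrace_cfg M Y u v) ->
  forall S : {set I}, (#|S| <= #|M|)%N ->
  forall u v, ptrace_cfg S X u v = ptrace_cfg S Y u v.
Proof.
move=> X_sw Y_sw XYM S.
move: {2}#|S :\: M| (leqnn #|S :\: M|) => N.
elim: N S => [|N IH] S SMN SM.
  have sub : S \subset M by rewrite -setD_eq0 -cards_eq0 -leqn0.
  move=> u v; rewrite (ptrace_cfg_split _ _ _ sub) (ptrace_cfg_split _ _ _ sub).
  by apply: eq_bigr => z _; apply: XYM.
have [sub|] := boolP (S \subset M).
  move=> u v; rewrite (ptrace_cfg_split _ _ _ sub) (ptrace_cfg_split _ _ _ sub).
  by apply: eq_bigr => z _; apply: XYM.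
case/subsetPn => a aS aM.
have : ~~ (M \subset S).
  apply/negP => MS; have /eqP MeqS : M == S by rewrite eqEcard MS SM.
  by rewrite MeqS aS in aM.
case/subsetPn => b bM bS.
have IHS : forall u v, ptrace_cfg (tperm a b @: S) X u v = ptrace_cfg (tperm a b @: S) Y u v.
  apply: IH; last by rewrite card_imset //; apply: perm_inj.
  rewrite -ltnS; apply: leq_trans SMN; apply: proper_card; apply/properP; split.
    apply/subsetP => k; rewrite !inE mem_tperm_imset => /andP [kM kS].
    case: (tpermP a b k) kS => [ka|kb|ka kb] kS; rewrite ?kM ?kS //.
    - by rewrite kS in bS.
    - by rewrite kb bM in kM.
  by exists a; rewrite !inE ?aM ?aS // mem_tperm_imset tpermL (negbTE bS) andbF.
by move=> u v; rewrite (ptrace_cfg_tperm _ _ _ (X_sw a b)) (ptrace_cfg_tperm _ _ _ (Y_sw a b)).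
Qed.

End SeparableMarginals.

Section Extension.
Context {R : realType}.
Local Notation C := (R[i]).
Local Notation qop := (@qop R).

Variables (I : finType) (M : {set I}) (rho : qop I).
Variables (m : nat) (p c : 'I_m -> C) (b : 'I_m -> bool -> C).
Hypothesis rho_sym : symmetric_state rho.
Hypothesis M0 : (0 < #|M|)%N.
Hypotheses (p0 : forall j, 0 <= p j) (p1 : \sum_j p j = 1).
Hypothesis unit_norm : forall j, c j * (c j)^* * qubit_sqnorm (b j) ^+ #|M| = 1.
Hypothesis rhoM : forall x y, ptrace M rho x y =
  \sum_j p j * proj (fun x => c j * \prod_k b j (x k)) x y.

Let d := (#|I| - #|M|)%N.
Let Psi j (u : cfg I) := c j * \prod_i b j (u i).
(* The weights compensate for the norm of the d extra factors b_j. *)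
Let w j := p j / qubit_sqnorm (b j) ^+ d.

Definition extension : qop I := fun u v => \sum_j w j * Psi j u * (Psi j v)^*.

Let sqnorm_neq0 j : qubit_sqnorm (b j) != 0.
Proof.
apply/eqP => nb0; have := unit_norm j; rewrite nb0 expr0n (gtn_eqF M0) mulr0.
by move/eqP; rewrite eq_sym oner_eq0.
Qed.

Let w0 j : 0 <= w j.
Proof. by rewrite divr_ge0 ?p0 // exprn_ge0 // qubit_sqnorm_ge0. Qed.

Let wE j : w j * qubit_sqnorm (b j) ^+ d = p j.
Proof. by rewrite divfK // expf_neq0 ?sqnorm_neq0. Qed.

Lemma extension_trace : \sum_u extension u u = 1.
Proof.
rewrite /extension exchange_big /= -p1; apply: eq_bigr => j _.
rewrite (eq_bigr (fun u => w j * (Psi j u * (Psi j u)^*))) => [|u _]; last first.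
  by rewrite mulrA.
rewrite -mulr_sumr sqnorm_tensor_power (_ : #|I| = d + #|M|)%N; last first.
  by rewrite subnK // max_card.
by rewrite exprD -(wE j) -[RHS]mulr1 -(unit_norm j); ring.
Qed.

Lemma extension_density : density extension.
Proof.
by apply: (@density_mixture _ _ _ xpredT w Psi) => //; apply: extension_trace.
Qed.

Lemma extension_fullsep : fully_separable extension.
Proof.
apply: (conv_pure_sub (@tensor_power_fullsep _ _)).
apply: (@conv_pure_mixture _ I 'I_m tensor_power xpredT w Psi) => //.
- by move=> c' v; apply: tensor_power_scale.
- by move=> j _; exists (c j), (b j).
- exact: extension_trace.
Qed.

Lemma extension_swap a b' x y :
  extension (swapcfg a b' x) (swapcfg a b' y) = extension x y.
Proof.
have Psi_sw j u : Psi j (swapcfg a b' u) = Psi j u.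
  rewrite /Psi; congr (_ * _).
  rewrite [RHS](reindex_inj (@perm_inj _ (tperm a b'))) /=.
  by apply: eq_bigr => i _; rewrite ffunE.
by apply: eq_bigr => j _; rewrite !Psi_sw.
Qed.

Lemma ptrace_extension_base u v :
  ptrace_cfg M extension u v = ptrace_cfg M rho u v.
Proof.
rewrite ptrace_cfgE [RHS]/ptrace_cfg rhoM /extension exchange_big /=.
apply: eq_bigr => j _.
rewrite (eq_bigr (fun z => w j * (Psi j (splice M u z) * (Psi j (splice M v z))^*)));
  last by move=> z _; rewrite mulrA.
rewrite -mulr_sumr ptrace_tensor_power /proj.
have -> : #|~: M| = d by rewrite /d -(cardsC M) addKn.
have restrE t : \prod_k b j (restr M t k) = \prod_(k : sub M) b j (t (val k)).
  by apply: eq_bigr => k _; rewrite ffunE.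
by rewrite -(wE j) !restrE rmorphM rmorph_prod /= big_split /=; ring.
Qed.

Lemma extension_marginals (S : {set I}) : (#|S| <= #|M|)%N ->
  forall x y, ptrace S extension x y = ptrace S rho x y.
Proof.
move=> SM x y; rewrite !(ptrace_glue _ _ _ cfg0).
apply: (swap_invariant_marginals (M := M) extension_swap (symmetric_state_swap rho_sym)) => //.
exact: ptrace_extension_base.
Qed.

End Extension.

Section LowerBound.
Context {R : realType}.
Local Notation C := (R[i]).
Local Notation qop := (@qop R).

Lemma symmetric_fullsep_extension {I : finType} (M : {set I}) (rho : qop I) :
  symmetric_state rho -> (0 < #|M|)%N -> conv_pure tensor_power (ptrace M rho) ->
  exists sigma, [/\ density sigma, fully_separable sigma &
    forall S : {set I}, (#|S| <= #|M|)%N ->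
      forall x y, ptrace S sigma x y = ptrace S rho x y].
Proof.
move=> rho_sym M0 [m [p [phi [p0 p1 phi_pow rhoM]]]].
have [cb cbE] : exists cb : 'I_m -> C * (bool -> C),
    forall j x, phi j x = (cb j).1 * \prod_i (cb j).2 (x i).
  apply: (@fin_all_exists _ (fun _ => (C * (bool -> C))%type)
     (fun j cb => forall x, phi j x = cb.1 * \prod_i cb.2 (x i))) => j.
  by have [_ [c [b phiE]]] := phi_pow j; exists (c, b).
pose c j := (cb j).1; pose b j := (cb j).2.
have unit_norm j : c j * (c j)^* * qubit_sqnorm (b j) ^+ #|M| = 1.
  have [phi1 _] := phi_pow j.
  have cardM : #|{: sub M}| = #|M| by rewrite card_sig; apply: eq_card => i; rewrite inE.
  rewrite -cardM -sqnorm_tensor_power -[RHS]phi1.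
  by apply: eq_bigr => x _; rewrite mulrC !cbE.
have rhoM' x y : ptrace M rho x y =
    \sum_j p j * proj (fun x => c j * \prod_k b j (x k)) x y.
  by rewrite rhoM; apply: eq_bigr => j _; rewrite /proj !cbE.
exists (extension M p c b); split.
- exact: extension_density.
- exact: extension_fullsep.
- exact: extension_marginals.
Qed.

Lemma first_ord_mem n k i (ik : (i < k)%N) (kn : (k <= n)%N) :
  Ordinal (leq_trans ik kn) \in first n k.
Proof. by rewrite inE. Qed.

Definition first_ord n k i (ik : (i < k)%N) (kn : (k <= n)%N) : sub (first n k) :=
  exist (fun i => i \in first n k) _ (first_ord_mem ik kn).

Lemma separable_marginal_conv_tensor_power n (rho : qop 'I_n) k :
  symmetric_state rho -> (1 <= k <= n)%N ->
  ((2 <= k)%N -> ~ entangled (ptrace (first n k) rho)) ->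
  conv_pure tensor_power (ptrace (first n k) rho).
Proof.
move=> rho_sym /andP [k1 kn] rhok_sep.
case: (ltngtP k 1) => [|k2|k_eq1]; first by rewrite ltnNge k1.
  have i01 : first_ord (leq_trans (isT : 0 < 2)%N k2) kn != first_ord k2 kn.
    by apply/eqP => /(f_equal (fun t => val (val t))).
  apply: (fullsep_symmetric_conv_tensor_power i01).
    exact: (ptrace_swap_row (symmetric_state_swap_row rho_sym)).
  exact: NNPP (rhok_sep k2).
subst k; apply: (@qubit_density_conv_tensor_power _ _ (first_ord (isT : 0 < 1)%N kn)).
  move=> i; apply: val_inj; apply: val_inj => /=.
  by have := valP i; rewrite inE ltnS leqn0 => /eqP.
by apply: ptrace_density; case: rho_sym.
Qed.

Lemma not_detects_GME_small n (rho : qop 'I_n) k (Sc : {set {set 'I_n}}) :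
  (2 <= n)%N -> symmetric_state rho -> (1 <= k <= n)%N ->
  conv_pure tensor_power (ptrace (first n k) rho) ->
  (forall S, S \in Sc -> (#|S| <= k)%N) -> ~ detects_GME Sc rho.
Proof.
move=> n2 rho_sym /andP [k1 kn] rhok_pow Sc_small Sc_detects.
have k0 : (0 < #|first n k|)%N by rewrite card_first.
have [sigma [sigma_dens sigma_fs sigma_marg]] :=
  symmetric_fullsep_extension rho_sym k0 rhok_pow.
apply: (Sc_detects sigma).
  split => // S SSc x y; apply: sigma_marg; rewrite card_first //; exact: Sc_small.
apply: (conv_pure_sub _ sigma_fs) => psi psi_fs.
exists [set Ordinal n2]; split => //.
- by apply/eqP => /setP /(_ (Ordinal n2)); rewrite !inE eqxx.
- by apply/eqP => /setP /(_ (Ordinal (leq_trans (isT : 0 < 2)%N n2))); rewrite !inE.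
Qed.

Lemma symmetric_GME {I : finType} (rho : qop I) :
  symmetric_state rho -> entangled rho -> genuinely_entangled rho.
Proof.
move=> rho_sym rho_ent rho_bisep; apply: rho_ent.
apply: (conv_pure_sub (@tensor_power_fullsep _ _)).
apply: (compatible_bisep_tensor_power (Sc := [set setT]) rho_sym _ _ rho_bisep).
  by move=> a b; exists setT; rewrite ?inE.
by split=> [|S _ //]; case: rho_sym.
Qed.

Lemma symmetric_entangled_marginal_full n (rho : qop 'I_n) :
  (2 <= n)%N -> symmetric_state rho -> entangled rho ->
  entangled (ptrace (first n n) rho).
Proof.
move=> n2 rho_sym rho_ent rhon_sep; apply: rho_ent.
have n1 : (1 <= n <= n)%N by rewrite leqnn andbT ltnW.
have n0 : (0 < #|first n n|)%N by rewrite card_first // ltnW.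
have [sigma [_ sigma_fs sigma_marg]] := symmetric_fullsep_extension rho_sym n0
  (separable_marginal_conv_tensor_power rho_sym n1 (fun _ rhon_ent => rhon_ent rhon_sep)).
apply: (conv_pure_eq _ sigma_fs) => u v.
rewrite -(ptrace_setT sigma u v) -(ptrace_setT rho u v) /ptrace_cfg sigma_marg //.
by rewrite cardsT card_ord card_first.
Qed.

Lemma is_detection_length_least n (rho : qop 'I_n) k :
  (2 <= n)%N -> symmetric_state rho -> (2 <= k <= n)%N ->
  entangled (ptrace (first n k) rho) ->
  (forall j, (2 <= j < k)%N -> ~ entangled (ptrace (first n j) rho)) ->
  is_detection_length rho k.
Proof.
move=> n2 rho_sym /andP [k2 kn] rhok_ent below; split.
  exists [set S : {set 'I_n} | (#|S| <= k)%N]; split.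
    by apply: detects_GME_small_sets; rewrite ?k2.
  apply/eqP; rewrite eqn_leq; apply/andP; split.
    by apply/bigmax_leqP => S; rewrite inE.
  have := @leq_bigmax_cond _ (fun S => S \in [set S : {set 'I_n} | (#|S| <= k)%N])
     (fun S => #|S|) (first n k).
  by rewrite inE card_first // leqnn; apply.
move=> Sc Sc_detects; rewrite leqNgt; apply/negP => Sc_small.
have k1 : (1 <= k.-1 <= n)%N.
  by apply/andP; split; [rewrite -ltnS prednK // ltnW | apply: leq_trans (leq_pred _) kn].
apply: (not_detects_GME_small n2 rho_sym k1 _ _ Sc_detects).
  apply: separable_marginal_conv_tensor_power => // k2'; apply: below.
  by rewrite k2' /= ltn_predL; apply: leq_trans k2.
move=> S SSc; rewrite -ltnS prednK; last exact: ltnW.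
by apply: leq_ltn_trans Sc_small; apply: (leq_bigmax_cond S).
Qed.

End LowerBound.

Theorem proposition1 (R : realType) (n : nat) (rho : @qop R 'I_n) :
  (2 <= n)%N ->
  symmetric_state rho ->
  entangled rho ->
  genuinely_entangled rho /\
  exists k : nat,
    [/\ (2 <= k <= n)%N,
        entangled (ptrace (first n k) rho),
        (forall j : nat, (2 <= j < k)%N -> ~ entangled (ptrace (first n j) rho))
      & is_detection_length rho k].
Proof.
move=> n2 rho_sym rho_ent; split; first exact: symmetric_GME.
pose Q k := (2 <= k <= n)%N /\ entangled (ptrace (first n k) rho).
have Qn : Q n by split; [rewrite n2 leqnn | exact: symmetric_entangled_marginal_full].
have [k [[[krange rhok_ent] kmin] _]] :=
  dec_inh_nat_subset_has_unique_least_element Q (fun k => classic (Q k)) (ex_intro _ n Qn).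
have below j : (2 <= j < k)%N -> ~ entangled (ptrace (first n j) rho).
  move=> /andP [j2 jk] rhoj_ent; have /andP [_ kn] := krange.
  have /ssrnat.leP := kmin j (conj (introT andP (conj j2 (leq_trans (ltnW jk) kn))) rhoj_ent).
  by rewrite leqNgt jk.
by exists k; split => //; apply: is_detection_length_least.
Qed.
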